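(* For all finite multisets $\Gamma,\Delta$ of S4 formulas and all S4 formulas $A,B$: if $\mathrm{G3s}\vdash \Gamma\supset\Delta,\Box A,\Box B$ and $\mathrm{G3s}\vdash\Gamma\supset\Delta,\Box(A\to B),\Box B$, then $\mathrm{G3s}\vdash\Gamma\supset\Delta,\Box B$.
   Context: S4 formulas: $A ::= \bot \mid P \mid A_0\to A_1 \mid \Box A$ ($P$ atomic). Sequents $\Gamma\supset\Delta$ use finite multisets; $\Box\Gamma:=\{\Box C\mid C\in\Gamma\}$. G3s rules: (Ax) $P,\Gamma\supset\Delta,P$ ($P$ atomic); $(\bot\supset)$ $\bot,\Gamma\supset\Delta$; $(\to\supset)$ from $\Gamma\supset\Delta,A$ and $B,\Gamma\supset\Delta$ infer $A\to B,\Gamma\supset\Delta$; $(\supset\to)$ from $A,\Gamma\supset\Delta,B$ infer $\Gamma\supset\Delta,A\to B$; $(\Box\supset)$ from $A,\Box A,\Gamma\supset\Delta$ infer $\Box A,\Gamma\supset\Delta$; $(\supset\Box)$ from $\Box\Gamma\supset A$ infer $\Gamma',\Box\Gamma\supset\Delta',\Box A$. *)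

(* Multisets of formulas are represented by lists, taken up to
   permutation: every rule's conclusion is stated modulo Permutation, so
   derivability is a predicate on multisets. *)
From Stdlib Require Import List Permutation.
Import ListNotations.

Inductive form : Type :=
| Bot : form
| Var : nat -> form
| Imp : form -> form -> form
| Box : form -> form.

Definition boxes (G : list form) : list form := map Box G.

Inductive G3s : list form -> list form -> Prop :=
| G3s_Ax : forall p G D G' D',
    Permutation G' (Var p :: G) -> Permutation D' (Var p :: D) ->
    G3s G' D'
| G3s_BotL : forall G D G',
    Permutation G' (Bot :: G) -> G3s G' D
| G3s_ImpL : forall A B G D G',
    G3s G (A :: D) -> G3s (B :: G) D ->
    Permutation G' (Imp A B :: G) -> G3s G' D
| G3s_ImpR : forall A B G D D',
    G3s (A :: G) (B :: D) ->
    Permutation D' (Imp A B :: D) -> G3s G D'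
| G3s_BoxL : forall A G D G',
    G3s (A :: Box A :: G) D ->
    Permutation G' (Box A :: G) -> G3s G' D
| G3s_BoxR : forall A G Gw Dw G' D',
    G3s (boxes G) [A] ->
    Permutation G' (Gw ++ boxes G) -> Permutation D' (Box A :: Dw) ->
    G3s G' D'.

(* The theorem is an instance of cut admissibility for G3s.  From
   the first hypothesis (weakened by Box (A -> B)) and the derivable sequent
   Box A, Box (A -> B) ⊃ Box B, a cut on Box A gives
   Box (A -> B), Gamma ⊃ Delta, Box B; a cut on Box (A -> B) against the
   second hypothesis then yields Gamma ⊃ Delta, Box B.

   Cut admissibility is proved in the usual Gentzen style for a height-indexed
   copy G3h of the calculus: by induction on the size of the cut formula and,
   inside, on the sum of the heights of the premises.  The only genuinely modal case, where both
   premises end in the right box rule, pushes the cut onto the boxed parts of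
   the context (nonboxes / unboxes). *)

From Stdlib Require Import List Permutation Arith Lia Wf_nat.
Import ListNotations.

(* A multiset identity between lists is decided by comparing the number of
   occurrences of every formula; this reduces permutation goals, together with
   the permutation hypotheses in context, to linear arithmetic. *)
Lemma form_eq_dec : forall x y : form, {x = y} + {x <> y}.
Proof. decide equality; apply Nat.eq_dec. Qed.

Ltac split_form_eq :=
  repeat (match goal with
  | |- context[form_eq_dec ?a ?b] => destruct (form_eq_dec a b)
  | H : context[form_eq_dec ?a ?b] |- _ => destruct (form_eq_dec a b) end; simpl in *).

Ltac perm_solve :=
  let x := fresh "x" in
  apply (proj2 (Permutation_count_occ form_eq_dec _ _)); intro x;
  repeat match goal with H : Permutation _ _ |- _ =>
    let H' := fresh in
    pose proof (proj1 (Permutation_count_occ form_eq_dec _ _) H x) as H'; clear H end;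
  unfold boxes in *; rewrite ?map_app in *; repeat (rewrite ?count_occ_app in *; simpl in *);
  split_form_eq; try congruence; lia.

(* Derivations of height at most n: G3s with every rule counted.  Axioms are
   available at every height, so heights are upper bounds (G3h_mono). *)
Inductive G3h : nat -> list form -> list form -> Prop :=
| H_Ax : forall n p G D G' D',
    Permutation G' (Var p :: G) -> Permutation D' (Var p :: D) -> G3h n G' D'
| H_Bot : forall n G D G', Permutation G' (Bot :: G) -> G3h n G' D
| H_ImpL : forall n A B G D G',
    G3h n G (A :: D) -> G3h n (B :: G) D ->
    Permutation G' (Imp A B :: G) -> G3h (S n) G' D
| H_ImpR : forall n A B G D D',
    G3h n (A :: G) (B :: D) -> Permutation D' (Imp A B :: D) -> G3h (S n) G D'
| H_BoxL : forall n A G D G',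
    G3h n (A :: Box A :: G) D -> Permutation G' (Box A :: G) -> G3h (S n) G' D
| H_BoxR : forall n A G Gw Dw G' D',
    G3h n (boxes G) [A] ->
    Permutation G' (Gw ++ boxes G) -> Permutation D' (Box A :: Dw) ->
    G3h (S n) G' D'.

Lemma G3h_perm : forall n G D, G3h n G D -> forall G2 D2,
  Permutation G G2 -> Permutation D D2 -> G3h n G2 D2.
Proof.
  induction 1; intros G2 D2 P1 P2.
  - eapply H_Ax; [rewrite <- P1 | rewrite <- P2]; eassumption.
  - eapply H_Bot; rewrite <- P1; eassumption.
  - eapply H_ImpL; [apply IHG3h1 | apply IHG3h2 | rewrite <- P1; eassumption]; auto.
  - eapply H_ImpR; [apply IHG3h | rewrite <- P2; eassumption]; auto.
  - eapply H_BoxL; [apply IHG3h | rewrite <- P1; eassumption]; auto.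
  - eapply H_BoxR; [eassumption | rewrite <- P1 | rewrite <- P2]; eassumption.
Qed.

Lemma G3h_mono : forall n G D, G3h n G D -> forall m, n <= m -> G3h m G D.
Proof.
  induction 1; intros m Hm; try (destruct m; [lia|]).
  - eapply H_Ax; eassumption.
  - eapply H_Bot; eassumption.
  - eapply H_ImpL; [apply IHG3h1 | apply IHG3h2 | ]; eauto; lia.
  - eapply H_ImpR; [apply IHG3h | ]; eauto; lia.
  - eapply H_BoxL; [apply IHG3h | ]; eauto; lia.
  - eapply H_BoxR; [apply IHG3h | |]; eauto; lia.
Qed.

Lemma G3h_weak : forall n G D, G3h n G D -> forall X Y, G3h n (X ++ G) (Y ++ D).
Proof.
  induction 1; intros X Y.
  - eapply (H_Ax _ p (X ++ G) (Y ++ D)); perm_solve.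
  - eapply (H_Bot _ (X ++ G)); perm_solve.
  - eapply (H_ImpL _ A B (X ++ G)).
    + eapply G3h_perm; [apply (IHG3h1 X Y) | |]; perm_solve.
    + eapply G3h_perm; [apply (IHG3h2 X Y) | |]; perm_solve.
    + perm_solve.
  - eapply (H_ImpR _ A B _ (Y ++ D)).
    + eapply G3h_perm; [apply (IHG3h X Y) | |]; perm_solve.
    + perm_solve.
  - eapply (H_BoxL _ A (X ++ G)).
    + eapply G3h_perm; [apply (IHG3h X Y) | |]; perm_solve.
    + perm_solve.
  - eapply (H_BoxR _ A G (X ++ Gw) (Y ++ Dw)); [eassumption | perm_solve | perm_solve].
Qed.

Lemma G3h_weakL : forall n G D A, G3h n G D -> G3h n (A :: G) D.
Proof. intros n G D A H. exact (G3h_weak _ _ _ H [A] []). Qed.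

Lemma G3h_weakR : forall n G D A, G3h n G D -> G3h n G (A :: D).
Proof. intros n G D A H. exact (G3h_weak _ _ _ H [] [A]). Qed.

Lemma G3h_G3s : forall n G D, G3h n G D -> G3s G D.
Proof.
  induction 1.
  - eapply G3s_Ax; eauto.
  - eapply G3s_BotL; eauto.
  - eapply G3s_ImpL; eauto.
  - eapply G3s_ImpR; eauto.
  - eapply G3s_BoxL; eauto.
  - eapply G3s_BoxR; eauto.
Qed.

Lemma G3s_G3h : forall G D, G3s G D -> exists n, G3h n G D.
Proof.
  induction 1 as [| | ? ? ? ? ? _ [n1 H1] _ [n2 H2] | ? ? ? ? ? _ [n H]
                  | ? ? ? ? _ [n H] | ? ? ? ? ? ? _ [n H]].
  - exists 0. eapply H_Ax; eauto.
  - exists 0. eapply H_Bot; eauto.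
  - exists (S (max n1 n2)). eapply H_ImpL; eauto; eapply G3h_mono; eauto; lia.
  - exists (S n). eapply H_ImpR; eauto.
  - exists (S n). eapply H_BoxL; eauto.
  - exists (S n). eapply H_BoxR; eauto.
Qed.

Lemma G3s_perm : forall G D G2 D2,
  G3s G D -> Permutation G G2 -> Permutation D D2 -> G3s G2 D2.
Proof.
  intros G D G2 D2 H P1 P2. destruct (G3s_G3h _ _ H) as [n Hn].
  exact (G3h_G3s _ _ _ (G3h_perm _ _ _ Hn _ _ P1 P2)).
Qed.

Lemma G3s_weakL : forall A G D, G3s G D -> G3s (A :: G) D.
Proof.
  intros A G D H. destruct (G3s_G3h _ _ H) as [n Hn].
  exact (G3h_G3s _ _ _ (G3h_weakL _ _ _ A Hn)).
Qed.

Lemma in_perm_cons : forall (x : form) l, In x l -> exists k, Permutation l (x :: k).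
Proof.
  intros x l H. apply in_split in H as (a & b & ->). exists (a ++ b).
  symmetry; apply Permutation_middle.
Qed.

Lemma perm_cons_in : forall (x : form) l k, Permutation l (x :: k) -> In x l.
Proof. intros x l k H. eapply Permutation_in; [symmetry; eauto | left; auto]. Qed.

Lemma perm_cons_cases : forall (x y : form) l l', Permutation (x :: l) (y :: l') ->
  (x = y /\ Permutation l l') \/
  (x <> y /\ exists k, Permutation l (y :: k) /\ Permutation l' (x :: k)).
Proof.
  intros x y l l' H. destruct (form_eq_dec x y) as [->|Hne].
  - left. split; auto. eapply Permutation_cons_inv; eauto.
  - right. split; auto.
    assert (Hy : In y l).
    { destruct (Permutation_in y (Permutation_sym H) (in_eq y l')); [congruence | auto]. }
    destruct (in_perm_cons _ _ Hy) as [k Hk]. exists k. split; auto.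
    apply (Permutation_cons_inv (a := y)). rewrite <- H, Hk. apply perm_swap.
Qed.

Lemma perm_cons_boxes_cases : forall (x : form) l Gw S,
  Permutation (x :: l) (Gw ++ boxes S) ->
  (exists Gw', Permutation Gw (x :: Gw') /\ Permutation l (Gw' ++ boxes S)) \/
  (exists E S', x = Box E /\ Permutation S (E :: S') /\ Permutation l (Gw ++ boxes S')).
Proof.
  intros x l Gw S H.
  assert (Hx : In x (Gw ++ boxes S)) by (eapply Permutation_in; eauto; left; auto).
  apply in_app_or in Hx as [Hx|Hx].
  - left. destruct (in_perm_cons _ _ Hx) as [k Hk]. exists k. split; auto.
    apply (Permutation_cons_inv (a := x)). rewrite H, Hk. reflexivity.
  - right. unfold boxes in Hx. apply in_map_iff in Hx as (E & <- & HE).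
    destruct (in_perm_cons _ _ HE) as [k Hk]. exists E, k. repeat split; auto.
    apply (Permutation_cons_inv (a := Box E)). rewrite H. unfold boxes. rewrite Hk.
    simpl. symmetry. apply Permutation_middle.
Qed.

Lemma G3h_ax_in : forall n p G D, In (Var p) G -> In (Var p) D -> G3h n G D.
Proof.
  intros n p G D HG HD.
  destruct (in_perm_cons _ _ HG) as [k1 H1]. destruct (in_perm_cons _ _ HD) as [k2 H2].
  eapply H_Ax; eassumption.
Qed.

Lemma G3h_bot_in : forall n G D, In Bot G -> G3h n G D.
Proof. intros n G D H. destruct (in_perm_cons _ _ H) as [k Hk]. eapply H_Bot; eassumption. Qed.

Lemma G3h_inv_ImpR : forall n G D, G3h n G D -> forall A B D0,
  Permutation D (Imp A B :: D0) -> G3h n (A :: G) (B :: D0).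
Proof.
  induction 1; intros A0 B0 D0 HP.
  - apply (G3h_ax_in _ p).
    + right. eapply perm_cons_in; eassumption.
    + destruct (perm_cons_in _ _ _ (Permutation_trans (Permutation_sym HP) H0));
        [discriminate | right; auto].
  - apply G3h_bot_in. right. eapply perm_cons_in; eassumption.
  - eapply (H_ImpL _ A B (A0 :: G)).
    + eapply G3h_perm; [apply (IHG3h1 A0 B0 (A :: D0)) | |]; perm_solve.
    + eapply G3h_perm; [apply (IHG3h2 A0 B0 D0) | |]; perm_solve.
    + perm_solve.
  - rewrite HP in H0. apply perm_cons_cases in H0 as [[E P]|[_ (k & P1 & P2)]].
    + injection E as -> ->.
      eapply G3h_mono; [eapply G3h_perm; [eassumption| |]|]; [reflexivity|perm_solve|lia].
    + eapply (H_ImpR _ A B _ (B0 :: k)).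
      * eapply G3h_perm; [apply (IHG3h A0 B0 (B :: k)) | |]; perm_solve.
      * perm_solve.
  - eapply (H_BoxL _ A (A0 :: G)).
    + eapply G3h_perm; [apply (IHG3h A0 B0 D0) | |]; perm_solve.
    + perm_solve.
  - rewrite HP in H1. apply perm_cons_cases in H1 as [[E _]|[_ (k & P1 & P2)]]; [discriminate|].
    eapply (H_BoxR _ A G (A0 :: Gw) (B0 :: k)); [eassumption|perm_solve|perm_solve].
Qed.

Lemma G3h_inv_ImpL : forall n G D, G3h n G D -> forall A B G0,
  Permutation G (Imp A B :: G0) -> G3h n G0 (A :: D) /\ G3h n (B :: G0) D.
Proof.
  induction 1; intros A0 B0 G0 HP.
  - assert (In (Var p) G0).
    { destruct (perm_cons_in _ _ _ (Permutation_trans (Permutation_sym HP) H));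
        [discriminate | auto]. }
    assert (In (Var p) D') by (eapply perm_cons_in; eassumption).
    split; apply (G3h_ax_in _ p); simpl; auto.
  - assert (In Bot G0).
    { destruct (perm_cons_in _ _ _ (Permutation_trans (Permutation_sym HP) H));
        [discriminate | auto]. }
    split; apply G3h_bot_in; simpl; auto.
  - rewrite HP in H1. apply perm_cons_cases in H1 as [[E P]|[_ (k & P1 & P2)]].
    + injection E as -> ->. split.
      * eapply G3h_mono; [eapply G3h_perm; [exact H| |]|];
          [symmetry; exact P|reflexivity|lia].
      * eapply G3h_mono; [eapply G3h_perm; [exact H0| |]|];
          [symmetry; apply perm_skip; exact P|reflexivity|lia].
    + destruct (IHG3h1 A0 B0 k P2) as [I1 I2].
      destruct (IHG3h2 A0 B0 (B :: k) ltac:(perm_solve)) as [I3 I4]. split.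
      * eapply (H_ImpL _ A B k).
        -- eapply G3h_perm; [apply I1 | |]; perm_solve.
        -- eapply G3h_perm; [apply I3 | |]; perm_solve.
        -- perm_solve.
      * eapply (H_ImpL _ A B (B0 :: k)).
        -- eapply G3h_perm; [apply I2 | |]; perm_solve.
        -- eapply G3h_perm; [apply I4 | |]; perm_solve.
        -- perm_solve.
  - destruct (IHG3h A0 B0 (A :: G0) ltac:(perm_solve)) as [I1 I2]. split.
    + eapply (H_ImpR _ A B _ (A0 :: D)); [eapply G3h_perm; [apply I1| |]|]; perm_solve.
    + eapply (H_ImpR _ A B _ D); [eapply G3h_perm; [apply I2| |]|]; perm_solve.
  - rewrite HP in H0. apply perm_cons_cases in H0 as [[E _]|[_ (k & P1 & P2)]]; [discriminate|].
    destruct (IHG3h A0 B0 (A :: Box A :: k) ltac:(perm_solve)) as [I1 I2]. split.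
    + eapply (H_BoxL _ A k); [eapply G3h_perm; [apply I1| |]|]; perm_solve.
    + eapply (H_BoxL _ A (B0 :: k)); [eapply G3h_perm; [apply I2| |]|]; perm_solve.
  - rewrite HP in H0.
    apply perm_cons_boxes_cases in H0 as [(Gw' & P1 & P2)|(E & S' & HE & _)]; [|discriminate].
    split.
    + eapply (H_BoxR _ A G Gw' (A0 :: Dw)); [eassumption|perm_solve|perm_solve].
    + eapply (H_BoxR _ A G (B0 :: Gw') Dw); [eassumption|perm_solve|perm_solve].
Qed.

(* Height-preserving contraction of a duplicated atom on the left; needed when
   an axiom with the cut atom principal is cut against another derivation. *)
Lemma G3h_contr_var : forall n G D, G3h n G D -> forall p G0,
  Permutation G (Var p :: Var p :: G0) -> G3h n (Var p :: G0) D.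
Proof.
  induction 1; intros q G0 HP.
  - apply (G3h_ax_in _ p); [| eapply perm_cons_in; eassumption].
    pose proof (perm_cons_in _ _ _ (Permutation_trans (Permutation_sym HP) H)).
    simpl in *; tauto.
  - apply G3h_bot_in.
    pose proof (perm_cons_in _ _ _ (Permutation_trans (Permutation_sym HP) H)).
    simpl in *; intuition discriminate.
  - rewrite HP in H1. apply perm_cons_cases in H1 as [[E _]|[_ (k & P1 & P2)]]; [discriminate|].
    apply perm_cons_cases in P1 as [[E _]|[_ (k2 & P3 & P4)]]; [discriminate|].
    eapply (H_ImpL _ A B (Var q :: k2)).
    + eapply IHG3h1. rewrite P2, P4. reflexivity.
    + eapply G3h_perm; [eapply (IHG3h2 q (B :: k2)) | |]; [|perm_solve|reflexivity].
      rewrite P2, P4. perm_solve.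
    + perm_solve.
  - eapply (H_ImpR _ A B _ D); [eapply G3h_perm; [apply (IHG3h q (A :: G0))| |]|];
      [perm_solve|perm_solve|reflexivity|eassumption].
  - rewrite HP in H0. apply perm_cons_cases in H0 as [[E _]|[_ (k & P1 & P2)]]; [discriminate|].
    apply perm_cons_cases in P1 as [[E _]|[_ (k2 & P3 & P4)]]; [discriminate|].
    eapply (H_BoxL _ A (Var q :: k2)).
    + eapply G3h_perm; [eapply (IHG3h q (A :: Box A :: k2)) | |]; [|perm_solve|reflexivity].
      rewrite P2, P4. perm_solve.
    + perm_solve.
  - rewrite HP in H0.
    apply perm_cons_boxes_cases in H0 as [(Gw' & _ & P)|(E & S' & HE & _)]; [|discriminate].
    eapply H_BoxR; eassumption.
Qed.

(* Splitting a context into its non-boxed part and its boxed part: the boxed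
   part boxes (unboxes G) is what the right box rule may keep. *)
Fixpoint unboxes (l : list form) : list form :=
  match l with [] => [] | Box A :: l => A :: unboxes l | _ :: l => unboxes l end.

Fixpoint nonboxes (l : list form) : list form :=
  match l with [] => [] | Box A :: l => nonboxes l | x :: l => x :: nonboxes l end.

Lemma nonboxes_unboxes_split : forall l, Permutation l (nonboxes l ++ boxes (unboxes l)).
Proof.
  induction l as [|a l IH]; simpl; auto.
  destruct a; simpl; try (apply perm_skip; exact IH).
  unfold boxes in *; simpl. rewrite IH at 1. apply Permutation_middle.
Qed.

Lemma unboxes_app : forall a b, unboxes (a ++ b) = unboxes a ++ unboxes b.
Proof. induction a as [|x a IH]; intros; simpl; auto. destruct x; simpl; rewrite ?IH; auto. Qed.

Lemma unboxes_boxes : forall S, unboxes (boxes S) = S.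
Proof. induction S; simpl; auto. unfold boxes in *; simpl; congruence. Qed.

Lemma unboxes_perm : forall l l', Permutation l l' -> Permutation (unboxes l) (unboxes l').
Proof.
  induction 1; simpl; auto.
  - destruct x; simpl; auto.
  - destruct x, y; simpl; auto; apply perm_swap.
  - etransitivity; eauto.
Qed.

Lemma boxed_part_perm : forall G Gw S, Permutation G (Gw ++ boxes S) ->
  Permutation (boxes (unboxes G)) (boxes (unboxes Gw) ++ boxes S).
Proof.
  intros G Gw S H. apply unboxes_perm in H. rewrite unboxes_app, unboxes_boxes in H.
  unfold boxes. rewrite <- map_app. apply Permutation_map. exact H.
Qed.

Lemma G3s_id : forall A G D, G3s (A :: G) (A :: D).
Proof.
  induction A as [| p | A1 IH1 A2 IH2 | A IH]; intros G D.
  - eapply G3s_BotL. reflexivity.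
  - eapply G3s_Ax; reflexivity.
  - eapply (G3s_ImpR A1 A2 _ D); [|reflexivity].
    eapply (G3s_ImpL A1 A2 (A1 :: G)); [| | perm_solve].
    + eapply G3s_perm; [apply (IH1 G (A2 :: D))| |]; perm_solve.
    + eapply G3s_perm; [apply (IH2 (A1 :: G) D)| |]; perm_solve.
  - eapply (G3s_BoxR A [A] G D); [| perm_solve | reflexivity].
    eapply (G3s_BoxL A []); [apply IH | reflexivity].
Qed.

Fixpoint fsize (f : form) : nat :=
  match f with
  | Bot | Var _ => 1
  | Imp a b => S (fsize a + fsize b)
  | Box a => S (fsize a)
  end.

Section CutStep.

Variable C : form.

Hypothesis cut_smaller : forall C', fsize C' < fsize C ->
  forall G D, G3s G (C' :: D) -> G3s (C' :: G) D -> G3s G D.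

Variable k : nat.

Hypothesis cut_lower : forall a b G D,
  a + b < k -> G3h a G (C :: D) -> G3h b (C :: G) D -> G3s G D.

(* The modal key case: both premises end in the right box rule, the left one
   introducing the cut formula Box A, which the right one keeps in its boxed
   context.  The cut is pushed onto the boxed parts of the context. *)
Lemma cut_boxR_boxR : forall n m A S1 Gw G F S2 S' Gw2 Dw,
  C = Box A -> S n + m < k ->
  G3h n (boxes S1) [A] -> Permutation G (Gw ++ boxes S1) ->
  G3h m (boxes S2) [F] -> Permutation S2 (A :: S') -> Permutation G (Gw2 ++ boxes S') ->
  G3s G (Box F :: Dw).
Proof.
  intros n m A S1 Gw G F S2 S' Gw2 Dw -> Hlt dA PG dF PS PG'.
  assert (left : G3h (S n) (boxes (unboxes G)) [Box A; F]).
  { eapply (H_BoxR n A S1 (boxes (unboxes Gw)) [F]); [exact dA | | reflexivity].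
    apply boxed_part_perm, PG. }
  assert (right : G3h m (Box A :: boxes (unboxes G)) [F]).
  { pose proof (boxed_part_perm _ _ _ PG') as PB. pose proof (Permutation_map Box PS) as PS'.
    clear PG PG'.
    eapply G3h_perm; [apply (G3h_weak _ _ _ dF (boxes (unboxes Gw2)) []) | | reflexivity].
    perm_solve. }
  eapply (G3s_BoxR F (unboxes G) (nonboxes G) Dw); [| apply nonboxes_unboxes_split | reflexivity].
  exact (cut_lower _ _ _ _ Hlt left right).
Qed.

(* Both premises introduce the cut formula Box A: cut Box A against the premise
   of the left box rule (lower height), then cut the smaller formula A. *)
Lemma cut_boxR_boxL : forall n m A S1 Gw G D G3,
  C = Box A -> S n + m < k ->
  G3h n (boxes S1) [A] -> Permutation G (Gw ++ boxes S1) ->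
  G3h m (A :: Box A :: G3) D -> Permutation G3 G -> G3s G D.
Proof.
  intros n m A S1 Gw G D G3 -> Hlt dA PG dB PG3.
  assert (left : G3h (S n) G (Box A :: D)) by (eapply H_BoxR; [exact dA | exact PG | reflexivity]).
  apply (cut_smaller A ltac:(simpl; lia)).
  - apply (G3h_G3s n). eapply G3h_perm; [apply (G3h_weak _ _ _ dA Gw D)| |]; perm_solve.
  - eapply (cut_lower (S n) m); [exact Hlt | |].
    + apply G3h_weakL, left.
    + eapply G3h_perm; [exact dB | |]; perm_solve.
Qed.

Lemma cut_boxR_principal : forall n A S1 Gw G D h2 G2 D2,
  C = Box A -> S n + h2 = k ->
  G3h n (boxes S1) [A] -> Permutation G (Gw ++ boxes S1) ->
  G3h h2 G2 D2 -> Permutation G2 (Box A :: G) -> Permutation D2 D -> G3s G D.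
Proof.
  intros n A S1 Gw G D h2 G2 D2 HC Hk dA PG d2.
  assert (left : G3h (S n) G (Box A :: D)) by (eapply H_BoxR; [exact dA | exact PG | reflexivity]).
  destruct d2 as [m p G3 D3 G2 D2 T1 T2 | m G3 D3 G2 T1 | m E F G3 D3 G2 f1 f2 T1
                 | m E F G3 D3 D2 f T1 | m E G3 D3 G2 f T1 | m F S2 Gw2 Dw2 G2 D2 f T1 T2];
    intros P2 P3.
  -
    apply (G3h_G3s 0), (G3h_ax_in _ p).
    + destruct (perm_cons_in _ _ _ (Permutation_trans (Permutation_sym P2) T1));
        [discriminate | auto].
    + rewrite <- P3. eapply perm_cons_in; eassumption.
  - apply (G3h_G3s 0), G3h_bot_in.
    destruct (perm_cons_in _ _ _ (Permutation_trans (Permutation_sym P2) T1));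
      [discriminate | auto].
  - (* left implication rule: commute the cut upwards into both premises *)
    rewrite T1 in P2. symmetry in P2.
    apply perm_cons_cases in P2 as [[EE _]|[_ (k1 & U1 & U2)]]; [discriminate|].
    destruct (G3h_inv_ImpL _ _ _ left E F k1 U1) as [I1 I2].
    eapply (G3s_ImpL E F k1); [| | exact U1]; subst C;
      (eapply (cut_lower (S n) m); [lia| |]).
    + eapply G3h_perm; [exact I1| |]; perm_solve.
    + eapply G3h_perm; [exact f1| |]; perm_solve.
    + eapply G3h_perm; [exact I2| |]; perm_solve.
    + eapply G3h_perm; [exact f2| |]; perm_solve.
  -
    assert (R : Permutation (Box A :: D) (Imp E F :: (Box A :: D3))) by perm_solve.
    pose proof (G3h_inv_ImpR _ _ _ left E F _ R) as I.
    eapply (G3s_ImpR E F G D3); [|perm_solve]. subst C.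
    eapply (cut_lower (S n) m); [lia| |].
    + eapply G3h_perm; [exact I| |]; perm_solve.
    + eapply G3h_perm; [exact f| |]; perm_solve.
  -
    rewrite T1 in P2. symmetry in P2.
    apply perm_cons_cases in P2 as [[EE U]|[_ (k1 & U1 & U2)]].
    + injection EE as <-.
      apply (cut_boxR_boxL n m A S1 Gw G D G3); [exact HC | lia | exact dA | exact PG | | symmetry; exact U].
      eapply G3h_perm; [exact f | reflexivity | exact P3].
    + eapply (G3s_BoxL E k1); [|exact U1]. subst C.
      eapply (cut_lower (S n) m); [lia| |].
      * eapply G3h_perm; [apply (G3h_weakL _ _ _ E left)| |]; perm_solve.
      * eapply G3h_perm; [exact f| |]; perm_solve.
  - (* right box rule: Box A is either weakened away or kept in the boxed context *)
    rewrite T1 in P2. symmetry in P2.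
    apply perm_cons_boxes_cases in P2 as [(Gw' & _ & U2)|(E & S' & HE & U1 & U2)].
    + apply (G3h_G3s (S m)).
      eapply (H_BoxR m F S2 Gw' Dw2); [exact f|exact U2|rewrite <- P3; exact T2].
    + injection HE as <-. eapply G3s_perm; [| reflexivity | symmetry; rewrite <- P3; exact T2].
      eapply (cut_boxR_boxR n m); [exact HC | lia | exact dA | exact PG | exact f | exact U1 | exact U2].
Qed.

Lemma cut_step : forall h1 h2 G D,
  h1 + h2 = k -> G3h h1 G (C :: D) -> G3h h2 (C :: G) D -> G3s G D.
Proof.
  intros h1 h2 G D Hk d1 d2.
  remember (C :: D) as D1 eqn:HD1 in d1.
  destruct d1 as [n p G0 D0 G1 D1 Q1 Q2 | n G0 D1 G1 Q1 | n A B G0 D1 G1 e1 e2 Q1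
                 | n A B G0 D0 D1 e Q1 | n A G0 D1 G1 e Q1 | n A S1 Gw Dw G1 D1 e Q1 Q2];
    subst D1.
  - (* axiom: if C is the principal atom, contract it in the right premise;
       otherwise the conclusion is itself an axiom *)
    apply perm_cons_cases in Q2 as [[-> _]|[_ (k0 & R1 & _)]].
    + apply (G3h_G3s h2). eapply G3h_perm; [| symmetry; exact Q1 | reflexivity].
      apply (G3h_contr_var _ _ _ d2 p G0). perm_solve.
    + apply (G3h_G3s 0), (G3h_ax_in _ p); eapply perm_cons_in; eassumption.
  - apply (G3h_G3s 0), G3h_bot_in. eapply perm_cons_in; eassumption.
  -
    destruct (G3h_inv_ImpL _ _ _ d2 A B (C :: G0) ltac:(perm_solve)) as [I1 I2].
    eapply (G3s_ImpL A B G0); [| | exact Q1]; (eapply (cut_lower n h2); [lia| |]).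
    + eapply G3h_perm; [exact e1| |]; perm_solve.
    + eapply G3h_perm; [exact I1| |]; perm_solve.
    + eapply G3h_perm; [exact e2| |]; perm_solve.
    + eapply G3h_perm; [exact I2| |]; perm_solve.
  -
    apply perm_cons_cases in Q1 as [[E P]|[_ (k0 & R1 & R2)]].
    + (* principal: invert the right premise and cut on A and B *)
      subst C. destruct (G3h_inv_ImpL _ _ _ d2 A B G0 ltac:(reflexivity)) as [I1 I2].
      apply (cut_smaller B ltac:(simpl; lia)); [| exact (G3h_G3s _ _ _ I2)].
      apply (cut_smaller A ltac:(simpl; lia)).
      * apply (G3h_G3s h2). eapply G3h_perm; [apply (G3h_weakR _ _ _ B I1)| |]; perm_solve.
      * apply (G3h_G3s n). eapply G3h_perm; [exact e| |]; perm_solve.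
    + pose proof (G3h_inv_ImpR _ _ _ d2 A B k0 R1) as I.
      eapply (G3s_ImpR A B G0 k0); [|exact R1].
      eapply (cut_lower n h2); [lia| |].
      * eapply G3h_perm; [exact e| |]; perm_solve.
      * eapply G3h_perm; [exact I| |]; perm_solve.
  -
    eapply (G3s_BoxL A G0); [|exact Q1].
    eapply (cut_lower n h2); [lia| |].
    + eapply G3h_perm; [exact e| |]; perm_solve.
    + eapply G3h_perm; [apply (G3h_weakL _ _ _ A d2)| |]; perm_solve.
  -
    apply perm_cons_cases in Q2 as [[E _]|[_ (k0 & R1 & _)]].
    + apply (cut_boxR_principal n A S1 Gw G1 D h2 (C :: G1) D E Hk e Q1 d2);
        [rewrite E |]; reflexivity.
    + apply (G3h_G3s (S n)). eapply (H_BoxR n A S1 Gw k0); eauto.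
Qed.

End CutStep.

Theorem cut_admissible : forall C G D, G3s G (C :: D) -> G3s (C :: G) D -> G3s G D.
Proof.
  intro C. induction C as [C IHC] using (induction_ltof1 _ fsize).
  assert (by_height : forall k a b G D,
    a + b = k -> G3h a G (C :: D) -> G3h b (C :: G) D -> G3s G D).
  { intro k. induction k as [k IHk] using lt_wf_ind. intros a b G D Hk da db.
    eapply (cut_step C IHC k); [| exact Hk | exact da | exact db].
    intros a' b' G' D' Hlt. exact (IHk _ Hlt a' b' G' D' eq_refl). }
  intros G D H1 H2.
  destruct (G3s_G3h _ _ H1) as [a Ha]. destruct (G3s_G3h _ _ H2) as [b Hb].
  exact (by_height _ a b G D eq_refl Ha Hb).
Qed.

Lemma G3s_box_mp : forall A B G D, G3s (Box A :: Box (Imp A B) :: G) (Box B :: D).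
Proof.
  intros A B G D.
  eapply (G3s_BoxR B [A; Imp A B] G D); [| perm_solve | reflexivity].
  eapply (G3s_BoxL A [Box (Imp A B)]); [| reflexivity].
  eapply (G3s_BoxL (Imp A B) [A; Box A]); [| perm_solve].
  eapply (G3s_ImpL A B [Box (Imp A B); A; Box A]); [| | perm_solve].
  - eapply G3s_perm; [apply (G3s_id A [Box (Imp A B); Box A] [B])| |]; perm_solve.
  - eapply G3s_perm; [apply (G3s_id B [Box (Imp A B); A; Box A] [])| |]; perm_solve.
Qed.

Theorem mainTheorem3 : forall (G D : list form) (A B : form),
  G3s G (D ++ [Box A; Box B]) ->
  G3s G (D ++ [Box (Imp A B); Box B]) ->
  G3s G (D ++ [Box B]).
Proof.
  intros G D A B HA HAB.
  assert (dA : G3s (Box (Imp A B) :: G) (Box A :: Box B :: D)).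
  { apply G3s_weakL. eapply G3s_perm; [exact HA | |]; perm_solve. }
  assert (dAB : G3s G (Box (Imp A B) :: Box B :: D)).
  { eapply G3s_perm; [exact HAB | |]; perm_solve. }
  pose proof (cut_admissible (Box A) _ _ dA (G3s_box_mp A B G D)) as dB.
  pose proof (cut_admissible (Box (Imp A B)) _ _ dAB dB) as HB.
  eapply G3s_perm; [exact HB | |]; perm_solve.
Qed.
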